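(* For every $*$-term $P$, there exist $X\in\mathcal T_{A,\triangle}$ and $Y\in\mathcal T_A$ such that $se(P)=X[\triangle\mapsto Y]$, $X$ contains a leaf $\triangle$ (possibly $X=\triangle$), and $Y=se(R)$ where $R$ is the rightmost $\ell$-term in $P$.
   Context: Let $A$ be a nonempty set of atoms; terms are closed terms over constants $\mathsf T,\mathsf F$, atoms $a\in A$, unary $\neg$, binary $\land^\circ$, $\lor^\circ$. Evaluation trees $\mathcal T_A$: $\mathsf T,\mathsf F\in\mathcal T_A$ and $(X\unlhd a\unrhd Y)\in\mathcal T_A$ for $X,Y\in\mathcal T_A$, $a\in A$. $\mathcal T_{A,\triangle}$ is defined in the same way but with leaves in $\{\mathsf T,\mathsf F,\triangle\}$ (so $\mathcal T_A\subseteq\mathcal T_{A,\triangle}$). Leaf replacement $X[\ell_1\mapsto Y_1,\ldots]$ replaces every leaf labelled $\ell_i$ by $Y_i$ (recursively: a leaf $\ell_i$ becomes $Y_i$, other leaves unchanged, and $(X_1\unlhd a\unrhd X_2)[\ldots]=X_1[\ldots]\unlhd a\unrhd X_2[\ldots]$). $se$: $se(\mathsf T)=\mathsf T$, $se(\mathsf F)=\mathsf F$, $se(a)=\mathsf T\unlhd a\unrhd\mathsf F$, $se(\neg P)=se(P)[\mathsf T\mapsto\mathsf F,\mathsf F\mapsto\mathsf T]$, $se(P\land^\circ Q)=se(P)[\mathsf T\mapsto se(Q)]$, $se(P\lor^\circ Q)=se(P)[\mathsf F\mapsto se(Q)]$. Syntactic categories ($a\in A$): $\mathsf T$-terms $P^{\mathsf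 T}::=\mathsf T\mid(a\land^\circ P^{\mathsf T})\lor^\circ P^{\mathsf T}$; $\mathsf F$-terms $P^{\mathsf F}::=\mathsf F\mid(a\lor^\circ P^{\mathsf F})\land^\circ P^{\mathsf F}$; $\ell$-terms $P^\ell::=(a\land^\circ P^{\mathsf T})\lor^\circ P^{\mathsf F}\mid(\neg a\land^\circ P^{\mathsf T})\lor^\circ P^{\mathsf F}$; $*$-terms $P^*::=P^c\mid P^d$, $P^c::=P^\ell\mid P^*\land^\circ P^d$, $P^d::=P^\ell\mid P^*\lor^\circ P^c$. A $*$-term is thus built from $\ell$-terms by $\land^\circ$ and $\lor^\circ$; its rightmost $\ell$-term is the last of these $\ell$-terms read from left to right. *)

From Stdlib Require Import List.

(* Closed terms over T, F, atoms, negation, left-sequential /\ and \/ . *)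
Inductive term (A : Type) : Type :=
| tT : term A
| tF : term A
| tAtom : A -> term A
| tNeg : term A -> term A
| tAnd : term A -> term A -> term A
| tOr  : term A -> term A -> term A.
Arguments tT {A}. Arguments tF {A}. Arguments tAtom {A} _.
Arguments tNeg {A} _. Arguments tAnd {A} _ _. Arguments tOr {A} _ _.

(* Evaluation trees with leaves in {T, F, triangle}: this is T_{A,triangle}. *)
Inductive etree (A : Type) : Type :=
| LT : etree A
| LF : etree A
| LTri : etree A
| Node : etree A -> A -> etree A -> etree A.  (* Node X a Y = X <| a |> Y *)
Arguments LT {A}. Arguments LF {A}. Arguments LTri {A}.
Arguments Node {A} _ _ _.

(* T_A : trees without triangle leaves. *)
Fixpoint no_tri {A} (X : etree A) : Prop :=
  match X with
  | LTri => False
  | Node X1 _ X2 => no_tri X1 /\ no_tri X2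
  | _ => True
  end.

Fixpoint has_tri {A} (X : etree A) : Prop :=
  match X with
  | LTri => True
  | Node X1 _ X2 => has_tri X1 \/ has_tri X2
  | _ => False
  end.

Fixpoint leaf_repl {A} (X : etree A) (YT YF Ytri : etree A) : etree A :=
  match X with
  | LT => YT
  | LF => YF
  | LTri => Ytri
  | Node X1 a X2 => Node (leaf_repl X1 YT YF Ytri) a (leaf_repl X2 YT YF Ytri)
  end.

Fixpoint se {A} (P : term A) : etree A :=
  match P with
  | tT => LT
  | tF => LF
  | tAtom a => Node LT a LF
  | tNeg P => leaf_repl (se P) LF LT LTri
  | tAnd P Q => leaf_repl (se P) (se Q) LF LTri
  | tOr P Q => leaf_repl (se P) LT (se Q) LTri
  end.

Inductive Tterm {A} : term A -> Prop :=
| Tterm_T : Tterm tT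
| Tterm_step : forall (a : A) P Q, Tterm P -> Tterm Q ->
    Tterm (tOr (tAnd (tAtom a) P) Q).

Inductive Fterm {A} : term A -> Prop :=
| Fterm_F : Fterm tF
| Fterm_step : forall (a : A) P Q, Fterm P -> Fterm Q ->
    Fterm (tAnd (tOr (tAtom a) P) Q).

Inductive lterm {A} : term A -> Prop :=
| lterm_pos : forall (a : A) P Q, Tterm P -> Fterm Q ->
    lterm (tOr (tAnd (tAtom a) P) Q)
| lterm_neg : forall (a : A) P Q, Tterm P -> Fterm Q ->
    lterm (tOr (tAnd (tNeg (tAtom a)) P) Q).

Inductive cterm {A} : term A -> Prop :=
| cterm_l : forall P, lterm P -> cterm P
| cterm_and : forall P Q, starterm P -> dterm Q -> cterm (tAnd P Q)
with dterm {A} : term A -> Prop :=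
| dterm_l : forall P, lterm P -> dterm P
| dterm_or : forall P Q, starterm P -> cterm Q -> dterm (tOr P Q)
with starterm {A} : term A -> Prop :=
| star_c : forall P, cterm P -> starterm P
| star_d : forall P, dterm P -> starterm P.

(* Note that an l-term has top-level shape (_ /\ _) \/ Q with Q an F-term,
   never a *-term, so the l-term case must be detected first. *)
Inductive rightmost_l {A} : term A -> term A -> Prop :=
| rm_l : forall P, lterm P -> rightmost_l P P
| rm_and : forall P Q R, starterm P -> dterm Q -> rightmost_l Q R ->
    rightmost_l (tAnd P Q) R
| rm_or : forall P Q R, starterm P -> cterm Q -> rightmost_l Q R ->
    rightmost_l (tOr P Q) R.

(* For an l-term R take
   X = triangle and Y = se(R).  For P /\ Q (resp. P \/ Q) with
   se(Q) = X[triangle |-> Y], the tree se(P)[T |-> X] (resp. se(P)[F |-> X])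
   still contains a triangle, because se(P) of a *-term has both a T-leaf and
   an F-leaf; and since no evaluation tree se(P) has triangle leaves,
   replacing leaves commutes with plugging Y in. *)


Scheme starterm_mut_ind := Induction for starterm Sort Prop
with cterm_mut_ind := Induction for cterm Sort Prop
with dterm_mut_ind := Induction for dterm Sort Prop.

Section LeafReplacement.
Context {A : Type}.
Implicit Types X Y YT YF Yt l m : etree A.

Fixpoint has_leaf l X : Prop :=
  match X with
  | Node X1 _ X2 => has_leaf l X1 \/ has_leaf l X2
  | _ => X = l
  end.

Lemma has_tri_has_leaf X : has_tri X <-> has_leaf LTri X.
Proof. induction X; simpl; intuition congruence. Qed.

Lemma has_leaf_leaf_repl l m X YT YF Yt :
  has_leaf l X -> has_leaf m (leaf_repl l YT YF Yt) ->
  has_leaf m (leaf_repl X YT YF Yt).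
Proof.
  induction X; simpl; intros Hl Hm; try (subst; assumption).
  destruct Hl; [left | right]; auto.
Qed.

Lemma no_tri_leaf_repl X YT YF Yt :
  no_tri X -> no_tri YT -> no_tri YF -> no_tri (leaf_repl X YT YF Yt).
Proof. induction X; simpl; tauto. Qed.

Lemma leaf_repl_leaf_repl X YT YF Yt ZT ZF Zt :
  leaf_repl (leaf_repl X YT YF Yt) ZT ZF Zt =
  leaf_repl X (leaf_repl YT ZT ZF Zt) (leaf_repl YF ZT ZF Zt)
              (leaf_repl Yt ZT ZF Zt).
Proof. induction X; simpl; congruence. Qed.

Lemma leaf_repl_no_tri X YT YF Yt Yt' :
  no_tri X -> leaf_repl X YT YF Yt = leaf_repl X YT YF Yt'.
Proof. induction X; simpl; intuition congruence. Qed.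

End LeafReplacement.

Section ShortCircuitEvaluation.
Context {A : Type}.
Implicit Types P Q : term A.

Lemma no_tri_se P : no_tri (se P).
Proof. induction P; simpl; auto; apply no_tri_leaf_repl; simpl; auto. Qed.

Lemma Tterm_has_T P : Tterm P -> has_leaf LT (se P).
Proof. induction 1; simpl; auto. Qed.

Lemma Fterm_has_F P : Fterm P -> has_leaf LF (se P).
Proof. induction 1; simpl; auto. Qed.

Lemma lterm_has_TF P : lterm P -> has_leaf LT (se P) /\ has_leaf LF (se P).
Proof.
  intros [a P1 Q1 HT HF | a P1 Q1 HT HF]; simpl.
  - split.
    + left; apply (has_leaf_leaf_repl LT); [apply Tterm_has_T | reflexivity]; auto.
    + right; apply Fterm_has_F; auto.
  - split.
    + right; apply (has_leaf_leaf_repl LT); [apply Tterm_has_T | reflexivity]; auto.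
    + left; apply Fterm_has_F; auto.
Qed.

Lemma starterm_has_TF P : starterm P -> has_leaf LT (se P) /\ has_leaf LF (se P).
Proof.
  set (TF := fun P : term A => has_leaf LT (se P) /\ has_leaf LF (se P)).
  apply (starterm_mut_ind A (fun P _ => TF P) (fun P _ => TF P) (fun P _ => TF P));
    unfold TF; auto using lterm_has_TF.
  - intros P1 Q1 _ [HT1 HF1] _ [HT2 HF2]; simpl.
    split; apply (has_leaf_leaf_repl LT); auto.
  - intros P1 Q1 _ [HT1 HF1] _ [HT2 HF2]; simpl.
    split; apply (has_leaf_leaf_repl LF); auto.
Qed.

End ShortCircuitEvaluation.

Theorem lemma3p2 (A : Type) (a0 : A) (P R : term A) :
  starterm P -> rightmost_l P R ->
  exists X Y : etree A,
    se P = leaf_repl X LT LF Y /\ has_tri X /\ no_tri Y /\ Y = se R.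
Proof.
  intros _ Hrm; induction Hrm as [P HP | P Q R HP _ Hrm IH | P Q R HP _ Hrm IH].
  - exists LTri, (se P); simpl; auto using no_tri_se.
  - destruct IH as (X & Y & Hse & Htri & HY & ->).
    exists (leaf_repl (se P) X LF LTri), (se R); repeat split; auto.
    + simpl; rewrite leaf_repl_leaf_repl, <- Hse; simpl.
      apply leaf_repl_no_tri, no_tri_se.
    + apply has_tri_has_leaf, (has_leaf_leaf_repl LT);
        [apply starterm_has_TF | apply has_tri_has_leaf]; auto.
  - destruct IH as (X & Y & Hse & Htri & HY & ->).
    exists (leaf_repl (se P) LT X LTri), (se R); repeat split; auto.
    + simpl; rewrite leaf_repl_leaf_repl, <- Hse; simpl.
      apply leaf_repl_no_tri, no_tri_se.
    + apply has_tri_has_leaf, (has_leaf_leaf_repl LF);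
        [apply starterm_has_TF | apply has_tri_has_leaf]; auto.
Qed.
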